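(* Let $p\colon X\to B$ be a Boolean set. Then the map $\alpha\colon X\to X^{\ast\ast}$, $a\mapsto L(a)=\{G\in X^{\ast}: a\in G\}$, together with $\overline{\alpha}\colon B\to B^{\ast\ast}$, $b\mapsto M(b)=\{F\in B^{\ast}: b\in F\}$, is an isomorphism of Boolean sets from $p\colon X\to B$ onto the Boolean set $X^{\ast\ast}\to B^{\ast\ast}$ of compact-open local sections of the dual étalé space $\widetilde p\colon X^{\ast}\to B^{\ast}$.
   Context: Convention: a ''Boolean algebra'' means a generalized Boolean algebra (relatively complemented distributive lattice with $0$). Boolean set: a presheaf of sets $p\colon X\to B$ over a Boolean algebra $B$ (pairwise disjoint $X_e$, restriction maps $x\mapsto x|^e_f$ for $e\ge f$, $|^e_e=\mathrm{id}$, $(x|^e_f)|^f_g=x|^e_g$) with all $X_e\ne\emptyset$, such that under the order $x\le y$ iff $p(x)\le p(y)$ and $x=y|^{p(y)}_{p(x)}$ there is a least element $0$, compatible pairs ($x\wedge y$ exists and $p(x\wedge y)=p(x)\wedge p(y)$) have joins, and $p(x)=0\Rightarrow x=0$. Morphism of Boolean sets: $\varphi$ with Boolean algebra morphism $\overline{\varphi}$, $q\varphi=\overline{\varphi}p$, $\varphi(x|^a_b)=\varphi(x)|^{\overline{\varphi}(a)}_{\overline{\varphi}(b)}$; isomorphism: invertible morphism. Dual étalé space: $X^{\ast}$ = ultrafilters of $(X,\le)$ (maximal proper non-empty down-directed upward-closed subsets) with basis $L(a)$; $B^{\ast}$ = ultrafilters of $B$ with basis $M(b)$; $\widetilde p(G)=p(G)$.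 For an étalé space $(E,r,Z)$ (surjective local homeomorphism, $Z$ Boolean space), its dual Boolean set is $E^{\ast}\to Z^{\ast}$ where $Z^{\ast}$ is the Boolean algebra of compact-open subsets of $Z$, $E^{\ast}$ the compact-open local sections (open sets on which $r$ is injective), $C\mapsto r(C)$, with restriction $C|^A_{A'}=C\cap r^{-1}(A')$. Here $X^{\ast\ast}$, $B^{\ast\ast}$ denote this construction applied to $\widetilde p\colon X^{\ast}\to B^{\ast}$. *)

From HB Require Import structures.
From mathcomp Require Import all_boot all_order.
From mathcomp Require Import boolp classical_sets.
From Stdlib Require List.
Set Implicit Arguments. Unset Strict Implicit. Unset Printing Implicit Defensive.
Local Open Scope classical_set_scope.

(* Generalized Boolean algebras given by explicit operations on a     *)
(* domain D : set T (so that the algebra of compact-open subsets of a *)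
(* space can be treated uniformly with a cbDistrLatticeType).         *)

Record gba_ops (T : Type) := GbaOps {
  g0 : T;
  gle : T -> T -> Prop;
  gmeet : T -> T -> T;
  gjoin : T -> T -> T;
  gdiff : T -> T -> T }.

Definition is_gba (T : Type) (D : set T) (o : gba_ops T) : Prop :=
  D (g0 o) /\
      (forall a b, D a -> D b ->
         [/\ D (gmeet o a b), D (gjoin o a b) & D (gdiff o a b)]) /\
      (forall a b, D a -> D b -> (gle o a b <-> gmeet o a b = a)) /\
      (forall a b, D a -> D b ->
         gmeet o a b = gmeet o b a /\ gjoin o a b = gjoin o b a) /\
      (forall a b c, D a -> D b -> D c ->
         gmeet o a (gmeet o b c) = gmeet o (gmeet o a b) c /\
         gjoin o a (gjoin o b c) = gjoin o (gjoin o a b) c) /\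
      (forall a b, D a -> D b ->
         gmeet o a (gjoin o a b) = a /\ gjoin o a (gmeet o a b) = a) /\
      (forall a b c, D a -> D b -> D c ->
         gmeet o a (gjoin o b c) = gjoin o (gmeet o a b) (gmeet o a c)) /\
      (forall a, D a -> gle o (g0 o) a) /\
      (forall a b, D a -> D b ->
         gmeet o (gdiff o a b) b = g0 o /\
         gjoin o (gdiff o a b) (gmeet o a b) = a).

Definition gba_morph (T1 T2 : Type) (D1 : set T1) (o1 : gba_ops T1)
    (D2 : set T2) (o2 : gba_ops T2) (f : T1 -> T2) : Prop :=
  [/\ (forall a, D1 a -> D2 (f a)),
      f (g0 o1) = g0 o2 &
      (forall a b, D1 a -> D1 b ->
         [/\ f (gmeet o1 a b) = gmeet o2 (f a) (f b),
             f (gjoin o1 a b) = gjoin o2 (f a) (f b) &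
             f (gdiff o1 a b) = gdiff o2 (f a) (f b)])].

Definition lat_ops (d : Order.disp_t) (B : cbDistrLatticeType d) : gba_ops B :=
  GbaOps (Order.bottom : B) (fun a b : B => (a <= b)%O)
         (@Order.meet d B) (@Order.join d B) (@Order.diff d B).

Definition set_ops (T : Type) : gba_ops (set T) :=
  GbaOps (@set0 T) (@subset T) (@setI T) (@setU T) (@setD T).

(* bres x f is the restriction x|^{p x}_f (meaningful for f <= p x).   *)

Set Strict Implicit.
Record bset := BSet {
  bX : Type;
  bB : Type;
  bDX : set bX;
  bDB : set bB;
  bops : gba_ops bB;
  bp : bX -> bB;
  bres : bX -> bB -> bX }.
Arguments bX : clear implicits. Arguments bB : clear implicits. Arguments bDX : clear implicits. Arguments bDB : clear implicits. Arguments bops : clear implicits. Arguments bp : clear implicits. Arguments bres : clear implicits.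
Unset Strict Implicit.

Definition ble (S : bset) (x y : bX S) : Prop :=
  gle (bops S) (bp S x) (bp S y) /\ x = bres S y (bp S x).

Definition is_glb (S : bset) (x y m : bX S) : Prop :=
  [/\ bDX S m, ble m x, ble m y &
      forall w, bDX S w -> ble w x -> ble w y -> ble w m].

Definition is_lub (S : bset) (x y j : bX S) : Prop :=
  [/\ bDX S j, ble x j, ble y j &
      forall w, bDX S w -> ble x w -> ble y w -> ble j w].

Definition is_boolean_set (S : bset) : Prop :=
  is_gba (bDB S) (bops S) /\
      (forall x, bDX S x -> bDB S (bp S x)) /\
      (forall x f, bDX S x -> bDB S f -> gle (bops S) f (bp S x) ->
         bDX S (bres S x f) /\ bp S (bres S x f) = f) /\
      (forall x, bDX S x -> bres S x (bp S x) = x) /\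
      (forall x f g, bDX S x -> bDB S f -> bDB S g ->
         gle (bops S) g f -> gle (bops S) f (bp S x) ->
         bres S (bres S x f) g = bres S x g) /\
      (forall e, bDB S e -> exists x, bDX S x /\ bp S x = e) /\
      (exists z, [/\ bDX S z, (forall x, bDX S x -> ble z x) &
                     (forall x, bDX S x -> bp S x = g0 (bops S) -> x = z)]) /\
      (* compatible pairs have joins *)
      (forall x y m, bDX S x -> bDX S y -> is_glb x y m ->
         bp S m = gmeet (bops S) (bp S x) (bp S y) ->
         exists j, is_lub x y j).

Definition bs_morph (S T : bset) (phi : bX S -> bX T) (phib : bB S -> bB T) : Prop :=
  [/\ gba_morph (bDB S) (bops S) (bDB T) (bops T) phib,
      (forall x, bDX S x -> bDX T (phi x)),
      (forall x, bDX S x -> bp T (phi x) = phib (bp S x)) &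
      (forall x b, bDX S x -> bDB S b -> gle (bops S) b (bp S x) ->
         phi (bres S x b) = bres T (phi x) (phib b))].

Definition bs_iso (S T : bset) (phi : bX S -> bX T) (phib : bB S -> bB T) : Prop :=
  bs_morph phi phib /\
  exists (psi : bX T -> bX S) (psib : bB T -> bB S),
    [/\ bs_morph psi psib,
        (forall x, bDX S x -> psi (phi x) = x),
        (forall y, bDX T y -> phi (psi y) = y),
        (forall b, bDB S b -> psib (phib b) = b) &
        (forall c, bDB T c -> phib (psib c) = c)].

Definition is_filter (T : Type) (D : set T) (le : T -> T -> Prop) (F : set T) : Prop :=
  [/\ F `<=` D,
      (exists x, F x),
      (exists x, D x /\ ~ F x),
      (forall x y, F x -> F y -> exists z, [/\ F z, le z x & le z y]) &
      (forall x y, F x -> D y -> le x y -> F y)].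

Definition is_ultrafilter (T : Type) (D : set T) (le : T -> T -> Prop) (F : set T) : Prop :=
  is_filter D le F /\ (forall G, is_filter D le G -> F `<=` G -> G = F).

(* topology on the points P generated by the basis (bas i)_{i in DI} *)
Definition open_basis (T I : Type) (P : set T) (DI : set I) (bas : I -> set T)
    (U : set T) : Prop :=
  U `<=` P /\ (forall t, U t -> exists i, [/\ DI i, bas i t & bas i `<=` U]).

Definition compact_in (T : Type) (op : set T -> Prop) (K : set T) : Prop :=
  forall (I : Type) (U : I -> set T), (forall i, op (U i)) ->
    K `<=` [set t | exists i, U i t] ->
    exists s : seq I, K `<=` [set t | exists i, List.In i s /\ U i t].

Section Dual.
Variable S : bset.

Definition Xstar : set (set (bX S)) := is_ultrafilter (bDX S) (@ble S).
Definition Bstar : set (set (bB S)) := is_ultrafilter (bDB S) (gle (bops S)).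

Definition Lset (a : bX S) : set (set (bX S)) := [set G | Xstar G /\ G a].
Definition Mset (b : bB S) : set (set (bB S)) := [set F | Bstar F /\ F b].

Definition ptilde (G : set (bX S)) : set (bB S) := bp S @` G.

Definition Xopen := open_basis Xstar (bDX S) Lset.
Definition Bopen := open_basis Bstar (bDB S) Mset.

Definition Xss (C : set (set (bX S))) : Prop :=
  [/\ Xopen C, compact_in Xopen C &
      (forall G H, C G -> C H -> ptilde G = ptilde H -> G = H)].

Definition Bss (A : set (set (bB S))) : Prop := Bopen A /\ compact_in Bopen A.

Definition dual : bset :=
  @BSet (set (set (bX S))) (set (set (bB S))) Xss Bss (set_ops (set (bB S)))
    (fun C => ptilde @` C)
    (fun C A => C `&` [set G | A (ptilde G)]).

End Dual.

Definition of_lattice (d : Order.disp_t) (B : cbDistrLatticeType d) (X : Type)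
    (p : X -> B) (res : X -> B -> X) : bset :=
  @BSet X B setT setT (lat_ops B) p res.

From mathcomp Require Import all_boot all_order.
From mathcomp Require Import boolp classical_sets.
From Stdlib Require List.
Set Implicit Arguments. Unset Strict Implicit. Unset Printing Implicit Defensive.
Import Order.Theory.
Local Open Scope classical_set_scope.
Local Open Scope order_scope.

(* An ultrafilter of [X] through [a] is the germ of [a] at its image, an ultrafilter
   of [B] through [p a], and every such ultrafilter of [B] arises this way; hence
   [ptilde] maps [L(a)] bijectively onto [M(p a)], [L(a)] is a compact-open local
   section and [L] commutes with restriction. Conversely a compact-open local section
   [C] is, by compactness, a finite union of sets [L(a_i)]; because [C] is a local
   section the [a_i] agree on overlaps, so they glue to one [a] with [C = L(a)].
   The same finite-union argument shows that [M] is onto the compact-open sets of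
   [B^*], and the prime ideal theorem for [B] makes [L] and [M] injective. A
   bijective morphism of Boolean sets is an isomorphism. *)

Lemma set_ops_gba (T : Type) (D : set (set T)) :
  D set0 ->
  (forall A A', D A -> D A' -> [/\ D (A `&` A'), D (A `|` A') & D (A `\` A')]) ->
  is_gba D (set_ops T).
Proof.
move=> D0 Dops; split=> //; split=> //.
split; first by move=> A A' _ _; split=> /setIidPl.
split; first by move=> A A' _ _; rewrite /= setIC setUC.
split; first by move=> A A' A'' _ _ _; rewrite /= setIA setUA.
split; first by move=> A A' _ _; rewrite /= setUC setKU setIC setKI.
split; first by move=> A A' A'' _ _ _; rewrite /= setIUr.
split; first by move=> A _; exact: sub0set.
by move=> A A' _ _; rewrite /= setDKI setUC setUIDK.
Qed.

Lemma compact_open_basic (T I : Type) (P : set T) (V : I -> set T) (C : set T) :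
  (forall i, V i `<=` P) -> (exists i0, V i0 = set0) ->
  (forall i j, V i `<=` C -> V j `<=` C -> exists k, V k = V i `|` V j) ->
  open_basis P setT V C -> compact_in (open_basis P setT V) C ->
  exists i, C = V i.
Proof.
move=> VP [i0 V0] VU [_ Cbasic] Ccomp.
pose U i := [set t | V i `<=` C /\ V i t].
pose W (s : seq I) := [set t | exists i, List.In i s /\ U i t].
have Uopen i : open_basis P setT V (U i).
  by split=> [t [_ /VP]//|t [iC Vit]]; exists i; split=> // t' Vit'; split.
have cover : C `<=` [set t | exists i, U i t].
  by move=> t /Cbasic[i [_ Vit iC]]; exists i.
have [s Cs] := Ccomp I U Uopen cover.
have WC s' : W s' `<=` C by move=> t [i [_ [iC Vit]]]; exact: iC.
have W_cons i s' : W (i :: s') = (V i `&` [set _ | V i `<=` C]) `|` W s'.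
  apply/seteqP; split=> [t [j [[<-|js] [jC Vjt]]]|t [[Vit iC]|[j [js Ujt]]]].
  - by left.
  - by right; exists j.
  - by exists i; split; [left|].
  - by exists j; split; [right|].
have W_basic s' : exists k, V k = W s'.
  elim: s' => [|i s' [k Vk]].
    by exists i0; rewrite V0; apply/seteqP; split=> // t [i [[]]].
  have [iC|niC] := pselect (V i `<=` C); rewrite W_cons.
    have kC : V k `<=` C by rewrite Vk; exact: WC.
    have [k' Vk'] := VU i k iC kC.
    by exists k'; rewrite Vk' Vk; congr (_ `|` _); apply/seteqP; split=> [t|t []].
  by exists k; rewrite -Vk; apply/seteqP; split=> [t|t [[]|]]; [right|..].
have [k Vk] := W_basic s; exists k; rewrite Vk.
by apply/seteqP; split; [exact: Cs | exact: WC].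
Qed.

Section GbaFacts.
Variables (T : Type) (D : set T) (o : gba_ops T).
Hypothesis gD : is_gba D o.

Lemma gba0 : D (g0 o).
Proof. by case: gD. Qed.

Lemma gba_closed a b : D a -> D b ->
  [/\ D (gmeet o a b), D (gjoin o a b) & D (gdiff o a b)].
Proof. by case: gD => _ [H _]; exact: H. Qed.

Lemma gba_leE a b : D a -> D b -> gle o a b <-> gmeet o a b = a.
Proof. by case: gD => _ [_ [H _]]; exact: H. Qed.

End GbaFacts.

Lemma gba_morph_le_reflect (T1 T2 : Type) (D1 : set T1) (o1 : gba_ops T1)
    (D2 : set T2) (o2 : gba_ops T2) (f : T1 -> T2) a b :
  is_gba D1 o1 -> is_gba D2 o2 -> gba_morph D1 o1 D2 o2 f ->
  (forall a b, D1 a -> D1 b -> f a = f b -> a = b) ->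
  D1 a -> D1 b -> gle o2 (f a) (f b) -> gle o1 a b.
Proof.
move=> g1 g2 [fD _ fops] finj Da Db /(gba_leE g2 (fD _ Da) (fD _ Db)) fab.
apply/(gba_leE g1 Da Db); apply: finj => //; first by case: (gba_closed g1 Da Db).
by case: (fops _ _ Da Db) => -> _ _.
Qed.

Lemma onto_inverse (A T : Type) (DA : set A) (DT : set T) (f : A -> T) (a0 : A) :
  (forall y, DT y -> exists2 x, DA x & f x = y) ->
  exists g : T -> A, forall y, DT y -> DA (g y) /\ f (g y) = y.
Proof.
move=> f_onto; have [g gK] : {g : T -> A & forall y, DT y -> DA (g y) /\ f (g y) = y}.
  apply: (@choice _ _ (fun y x => DT y -> DA x /\ f x = y)) => y.
  have [/f_onto[x Dx fx]|nDy] := pselect (DT y); first by exists x.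
  by exists a0.
by exists g.
Qed.

Lemma bs_iso_of_bij (S T : bset) (phi : bX S -> bX T) (phib : bB S -> bB T) :
  is_boolean_set S -> is_boolean_set T -> bs_morph phi phib ->
  (forall x x', bDX S x -> bDX S x' -> phi x = phi x' -> x = x') ->
  (forall b b', bDB S b -> bDB S b' -> phib b = phib b' -> b = b') ->
  (forall y, bDX T y -> exists2 x, bDX S x & phi x = y) ->
  (forall c, bDB T c -> exists2 b, bDB S b & phib b = c) ->
  bs_iso phi phib.
Proof.
move=> [gS [pS [resS [_ [_ [fibS _]]]]]] [gT _] mphi phi_inj phib_inj phi_onto phib_onto.
case: (mphi) => mphib phiD phip phires; case: (mphib) => phibD phib0 phibops.
have [x0 _] := fibS _ (gba0 gS).
have [psi psiK] := onto_inverse x0 phi_onto.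
have [psib psibK] := onto_inverse (g0 (bops S)) phib_onto.
have psi_phi x : bDX S x -> psi (phi x) = x.
  by move=> Dx; have [Dpsi E] := psiK _ (phiD _ Dx); exact: phi_inj.
have psib_phib b : bDB S b -> psib (phib b) = b.
  by move=> Db; have [Dpsi E] := psibK _ (phibD _ Db); exact: phib_inj.
have psib_morph : gba_morph (bDB T) (bops T) (bDB S) (bops S) psib.
  split; first by move=> c /psibK[].
    by rewrite -phib0 psib_phib //; exact: gba0 gS.
  move=> _ _ /phib_onto[b Db <-] /phib_onto[b' Db' <-].
  have [Dm Dj Dd] := gba_closed gS Db Db'.
  by have [<- <- <-] := phibops _ _ Db Db'; rewrite !psib_phib.
split=> //; exists psi, psib; split=> //.
- split=> //; first by move=> y /psiK[].
    by move=> _ /phi_onto[x Dx <-]; rewrite phip // !psi_phi ?psib_phib //; exact: pS.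
  move=> _ _ /phi_onto[x Dx <-] /phib_onto[b Db <-].
  rewrite phip // => /(gba_morph_le_reflect gS gT mphib phib_inj Db (pS _ Dx)) bx.
  have [Dres _] := resS x b Dx Db bx.
  by rewrite -phires // !psi_phi ?psib_phib.
- by move=> y /psiK[].
- by move=> c /psibK[].
Qed.

Section Ultrafilters.
Variables (d : Order.disp_t) (B : cbDistrLatticeType d).

Definition bfilter (F : set B) := is_filter setT (fun a b : B => a <= b) F.
Definition bultra (F : set B) := is_ultrafilter setT (fun a b : B => a <= b) F.
Definition stone (b : B) : set (set B) := [set F | bultra F /\ F b].

Lemma bfilter_up F a b : bfilter F -> F a -> a <= b -> F b.
Proof. by case=> _ _ _ _ H Fa ab; apply: H Fa I ab. Qed.

Lemma bfilterI F a b : bfilter F -> F a -> F b -> F (a `&` b).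
Proof.
move=> hF Fa Fb; case: (hF) => _ _ _ H _.
have [z [Fz za zb]] := H a b Fa Fb.
by apply: bfilter_up hF Fz _; rewrite lexI za zb.
Qed.

Lemma bfilter_bot F : bfilter F -> ~ F \bot.
Proof.
move=> hF F0; case: (hF) => _ _ [x [_ nFx]] _ _; apply: nFx.
exact: bfilter_up hF F0 (le0x _).
Qed.

Definition adjoin (A : set B) (c : B) := [set y | exists2 f, A f & f `&` c <= y].

Lemma adjoin_up A c a b : adjoin A c a -> a <= b -> adjoin A c b.
Proof. by move=> [f Af fa] ab; exists f => //; exact: le_trans ab. Qed.

Lemma adjoinI A c a b : (forall f g, A f -> A g -> A (f `&` g)) ->
  adjoin A c a -> adjoin A c b -> adjoin A c (a `&` b).
Proof.
move=> AI [f Af fa] [g Ag gb]; exists (f `&` g); first exact: AI.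
by rewrite lexI (le_trans _ fa) ?(le_trans _ gb) // leI2 ?leIl ?leIr.
Qed.

Lemma sub_adjoin A c : A `<=` adjoin A c.
Proof. by move=> f Af; exists f => //; exact: leIl. Qed.

Lemma adjoin_self A c : (exists f, A f) -> adjoin A c c.
Proof. by move=> [f Af]; exists f => //; exact: leIr. Qed.

Lemma adjoin_bfilter F c : bfilter F -> (forall f, F f -> f `&` c <> \bot) ->
  bfilter (adjoin F c).
Proof.
move=> hF Fc; have [_ [f0 Ff0] _ _ _] := hF; split=> //.
- by exists f0; exact: sub_adjoin.
- by exists \bot; split=> // -[f Ff]; rewrite lex0 => /eqP; exact: Fc.
- move=> a b Aa Ab; exists (a `&` b); rewrite leIl leIr; split=> //.
  by apply: adjoinI => // f g; exact: bfilterI.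
- by move=> a b Aa _; exact: adjoin_up.
Qed.

Lemma bultra_disjoint F b : bultra F -> ~ F b -> exists2 f, F f & f `&` b = \bot.
Proof.
move=> [hF max] nFb; apply: contra_notP nFb => nFdisj.
have hA : bfilter (adjoin F b) by apply: adjoin_bfilter => // f Ff E; apply: nFdisj; exists f.
rewrite -(max _ hA (@sub_adjoin F b)); apply: adjoin_self; by case: hF.
Qed.

Lemma bultra_prime F a b : bultra F -> F (a `|` b) -> F a \/ F b.
Proof.
move=> hU Fab; apply: contra_notP (bfilter_bot hU.1) => /not_orP[nFa nFb].
have [f1 Ff1 f1a] := bultra_disjoint hU nFa.
have [f2 Ff2 f2b] := bultra_disjoint hU nFb.
suff <- : (f1 `&` f2) `&` (a `|` b) = \bot.
  by apply: bfilterI hU.1 _ Fab; exact: bfilterI hU.1 Ff1 Ff2.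
apply/eqP; rewrite meetUr -lex0 leUx -[X in _ <= X]f1a -[X in _ && (_ <= X)]f2b.
by rewrite !leI2 ?leIl ?leIr.
Qed.

Lemma prime_bultra F : bfilter F -> (forall a b, F (a `|` b) -> F a \/ F b) ->
  bultra F.
Proof.
move=> hF Fprime; split=> // G hG FG; apply/seteqP; split=> // c Gc.
have [_ [f Ff] _ _ _] := hF.
have : F (f `&` c `|` f `\` c) by rewrite joinIB.
case/Fprime => Ffc.
  by apply: bfilter_up hF Ffc _; exact: leIr.
case: (bfilter_bot hG); rewrite -(diffIK f c).
by apply: bfilterI hG _ Gc; exact: FG.
Qed.

Section PrimeIdeal.
Variables (J : set B) (e : B).
Hypotheses (J0 : J \bot) (J_down : forall a b, J b -> a <= b -> J a)
  (JU : forall a b, J a -> J b -> J (a `|` b)) (Je : ~ J e).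

(* The last clause, rather than [A e], makes the empty chain admissible in Zorn's lemma. *)
Definition avoiding (A : set B) :=
  [/\ forall a b, A a -> a <= b -> A b, forall a b, A a -> A b -> A (a `&` b),
      forall c, A c -> ~ J c & forall c, A c -> A e].

Lemma avoiding_maximal :
  exists A, avoiding A /\ forall A', avoiding A' -> A `<=` A' -> A' `<=` A.
Proof.
have [A [avA Amax]] : exists A, avoiding A /\ forall A', A `<` A' -> ~ avoiding A'.
  apply: Zorn_bigcup => Fm Fav Ftot; split.
  - move=> a b [Y FY Ya] ab; exists Y => //; case: (Fav Y FY) => H _ _ _; exact: H Ya ab.
  - move=> a b [Y1 FY1 Y1a] [Y2 FY2 Y2b].
    have [sub|sub] := Ftot Y1 Y2 FY1 FY2.
      by exists Y2 => //; case: (Fav Y2 FY2) => _ H _ _; apply: H (sub a Y1a) Y2b.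
    by exists Y1 => //; case: (Fav Y1 FY1) => _ H _ _; apply: H Y1a (sub b Y2b).
  - by move=> c [Y FY Yc]; case: (Fav Y FY) => _ _ H _; exact: H.
  - by move=> c [Y FY Yc]; exists Y => //; case: (Fav Y FY) => _ _ _ H; exact: H Yc.
exists A; split=> // A' avA' AA'; apply: contra_notP (fun x => x) => nA'A.
exact: Amax A' (conj AA' nA'A) avA'.
Qed.

Section Maximal.
Variable A : set B.
Hypotheses (avA : avoiding A) (maxA : forall A', avoiding A' -> A `<=` A' -> A' `<=` A).

Lemma maximal_e : A e.
Proof.
have [_ _ _ Ae] := avA.
have [[c Ac]|nA] := pselect (exists c, A c); first exact: Ae Ac.
apply: (maxA (A' := [set c | e <= c])) => //=.
- split=> //= [a b ea ab|a b ea eb|c ec Jc]; first exact: le_trans ab.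
  + by rewrite lexI ea eb.
  + by apply: Je; exact: J_down Jc ec.
- by move=> c Ac; case: nA; exists c.
Qed.

Lemma maximal_adjoin c : (forall f, A f -> ~ J (f `&` c)) -> A c.
Proof.
have [_ AI _ _] := avA => fcJ.
apply: (maxA (A' := adjoin A c)); last 2 first.
- exact: sub_adjoin.
- by apply: adjoin_self; exists e; exact: maximal_e.
split=> [a b|a b|y [f Af fy] Jy|_ _]; [exact: adjoin_up | exact: adjoinI | |].
  by apply: (fcJ f Af); exact: J_down Jy fy.
by apply: sub_adjoin; exact: maximal_e.
Qed.

Lemma maximal_prime a b : A (a `|` b) -> A a \/ A b.
Proof.
have [_ AI AJ _] := avA => Aab; apply: contra_notP (AJ _ Aab) => /not_orP[nAa nAb].
have [f1 Af1 Jf1] : exists2 f, A f & J (f `&` a).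
  by apply: contra_notP nAa => nJ; apply: maximal_adjoin => f Af Jf; apply: nJ; exists f.
have [f2 Af2 Jf2] : exists2 f, A f & J (f `&` b).
  by apply: contra_notP nAb => nJ; apply: maximal_adjoin => f Af Jf; apply: nJ; exists f.
case: (AJ ((f1 `&` f2) `&` (a `|` b))); first exact: AI (AI _ _ Af1 Af2) Aab.
apply: J_down (JU Jf1 Jf2) _; rewrite meetUr leU2 // leI2 ?leIl ?leIr //.
Qed.

Lemma maximal_bfilter : bfilter A.
Proof.
have [Aup AI AJ _] := avA; split=> //.
- by exists e; exact: maximal_e.
- by exists \bot; split=> // /AJ.
- by move=> a b Aa Ab; exists (a `&` b); rewrite leIl leIr; split=> //; exact: AI.
- by move=> a b Aa _; exact: Aup.
Qed.

End Maximal.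

Lemma prime_ideal_bultra : exists F, [/\ bultra F, F e & forall c, F c -> ~ J c].
Proof.
have [A [avA maxA]] := avoiding_maximal; have [_ _ AJ _] := avA.
exists A; split=> //; last exact: maximal_e.
by apply: prime_bultra; [exact: maximal_bfilter | exact: maximal_prime].
Qed.

End PrimeIdeal.

Lemma bultra_separate a b : ~ a <= b -> exists F, [/\ bultra F, F a & ~ F b].
Proof.
move=> nab.
have [||||F [hU Fab _]] := @prime_ideal_bultra [set c | c = \bot] (a `\` b) => //.
- by move=> x y /= ->; rewrite lex0 => /eqP.
- by move=> x y /= -> ->; rewrite joinxx.
- by move/eqP; rewrite diff_eq0.
exists F; split=> [//||Fb]; first exact: bfilter_up hU.1 Fab (leBx _ _).
by apply: (bfilter_bot hU.1); rewrite -(diffIK a b); exact: bfilterI hU.1 Fab Fb.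
Qed.

Lemma stone0 : stone \bot = set0.
Proof. by apply/seteqP; split=> // F [hU F0]; case: (bfilter_bot hU.1 F0). Qed.

Lemma stone_mono a b : a <= b -> stone a `<=` stone b.
Proof. by move=> ab F [hU Fa]; split=> //; exact: bfilter_up hU.1 Fa ab. Qed.

Lemma stoneI a b : stone (a `&` b) = stone a `&` stone b.
Proof.
apply/seteqP; split=> [F SFab|F [[hU Fa] [_ Fb]]]; last by split=> //; exact: bfilterI hU.1 Fa Fb.
by split; apply: stone_mono SFab; rewrite ?leIl ?leIr.
Qed.

Lemma stoneU a b : stone (a `|` b) = stone a `|` stone b.
Proof.
apply/seteqP; split=> [F [hU /(bultra_prime hU) []]|F []]; [by left | by right |..].
- by apply: stone_mono; exact: leUl.
- by apply: stone_mono; exact: leUr.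
Qed.

Lemma stoneD a b : stone (a `\` b) = stone a `\` stone b.
Proof.
apply/seteqP; split=> [F [hU Fab]|F [[hU Fa] nSFb]].
  split; first by split=> //; exact: bfilter_up hU.1 Fab (leBx _ _).
  move=> [_ Fb]; apply: (bfilter_bot hU.1); rewrite -(diffIK a b).
  exact: bfilterI hU.1 Fab Fb.
split=> //; rewrite -(joinBI b a) in Fa; case: (bultra_prime hU Fa) => // Fab.
by case: nSFb; split=> //; exact: bfilter_up hU.1 Fab (leIr _ _).
Qed.

Lemma stone_le a b : stone a `<=` stone b -> a <= b.
Proof.
move=> ab; apply: contra_notP (fun x => x) => /bultra_separate[F [hU Fa nFb]].
by case: (ab F (conj hU Fa)).
Qed.

Lemma stone_inj a b : stone a = stone b -> a = b.
Proof. by move=> E; apply: le_anti; rewrite !stone_le // E. Qed.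

(* The compactness argument: a cover with no finite subcover yields an ideal of
   "finitely covered" elements missing [b0], and an ultrafilter avoiding it is a
   point that no member of the cover can contain. *)
Lemma compact_of_bultra (T : Type) (op : set T -> Prop) (K : set T)
    (q : T -> set B) (b0 : B) :
  (forall t, K t -> bultra (q t) /\ q t b0) ->
  (forall F, bultra F -> F b0 -> exists2 t, K t & q t = F) ->
  (forall U, op U -> forall t, K t -> U t ->
      exists2 c, q t c & forall t', K t' -> q t' c -> U t') ->
  compact_in op K.
Proof.
move=> qK q_onto q_basis I U Uop cover.
apply: contra_notP (fun x => x) => nfin.
pose J := [set c | exists s : seq I, forall t, K t -> q t c ->
                     exists i, List.In i s /\ U i t].
have [||||F [hF Fb FJ]] := @prime_ideal_bultra J b0.
- by exists [::] => t Kt q0; case: (bfilter_bot (qK t Kt).1.1 q0).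
- move=> x y [s hs] xy; exists s => t Kt qx; apply: (hs t Kt).
  exact: bfilter_up (qK t Kt).1.1 qx xy.
- move=> x y [s1 hs1] [s2 hs2]; exists (s1 ++ s2) => t Kt.
  move=> /(bultra_prime (qK t Kt).1) [/(hs1 t Kt)|/(hs2 t Kt)] [i [si Ui]].
    by exists i; split=> //; apply: List.in_or_app; left.
  by exists i; split=> //; apply: List.in_or_app; right.
- by move=> [s hs]; apply: nfin; exists s => t Kt; exact: hs t Kt (qK t Kt).2.
have [t Kt qt] := q_onto F hF Fb.
have [i Uit] := cover t Kt.
have [c qc cU] := q_basis (U i) (Uop i) t Kt Uit.
apply: (FJ c); first by rewrite -qt.
by exists [:: i] => t' Kt' qc'; exists i; split; [left | exact: cU].
Qed.

Lemma stone_open b : open_basis bultra setT stone (stone b).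
Proof. by split=> [F []|F Fb] //; exists b; split. Qed.

Lemma stone_compact b : compact_in (open_basis bultra setT stone) (stone b).
Proof.
apply: (@compact_of_bultra _ _ _ id b) => [F []|F hF Fb|U [_ Ubasic] F _ UF] //.
  by exists F.
have [c [_ [_ Fc] cU]] := Ubasic F UF.
by exists c => // F' [hF' _] F'c; apply: cU.
Qed.

Lemma stone_surj A : open_basis bultra setT stone A ->
  compact_in (open_basis bultra setT stone) A -> exists b, A = stone b.
Proof.
apply: compact_open_basic; first by move=> b F [].
  by exists \bot; exact: stone0.
by move=> a b _ _; exists (a `|` b); exact: stoneU.
Qed.

End Ultrafilters.

Section BooleanSet.
Variables (d : Order.disp_t) (B : cbDistrLatticeType d) (X : Type)
  (p : X -> B) (res : X -> B -> X).
Local Notation S := (of_lattice p res).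
Hypothesis HS : is_boolean_set S.

Lemma p_res x f : f <= p x -> p (res x f) = f.
Proof. by case: HS => _ [_ [H _]] fx; case: (H x f I I fx). Qed.

Lemma res_id x : res x (p x) = x.
Proof. by case: HS => _ [_ [_ [H _]]]; exact: H. Qed.

Lemma res_res x f g : g <= f -> f <= p x -> res (res x f) g = res x g.
Proof. by case: HS => _ [_ [_ [_ [H _]]]] gf fx; exact: H. Qed.

Lemma p_surj e : exists x, p x = e.
Proof. by case: HS => _ [_ [_ [_ [_ [H _]]]]]; case: (H e I) => x [_ <-]; exists x. Qed.

Lemma p0_uniq x y : p x = \bot -> p y = \bot -> x = y.
Proof.
case: HS => _ [_ [_ [_ [_ [_ [[z [_ _ H]] _]]]]]] px py.
by rewrite (H x I px) (H y I py).
Qed.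

Lemma lub_compatible x y m : is_glb (S := S) x y m -> p m = p x `&` p y ->
  exists j, is_lub (S := S) x y j.
Proof. by case: HS => _ [_ [_ [_ [_ [_ [_ H]]]]]]; exact: H. Qed.

Definition leX (x y : X) := p x <= p y /\ x = res y (p x).

Lemma res_leX x f : f <= p x -> leX (res x f) x.
Proof. by move=> fx; split; rewrite p_res. Qed.

Lemma p0_leX z x : p z = \bot -> leX z x.
Proof.
move=> pz; split; first by rewrite pz le0x.
by apply: p0_uniq; rewrite // p_res pz ?le0x.
Qed.

Definition compatible (x y : X) := res x (p x `&` p y) = res y (p x `&` p y).

Lemma compatible_glb x y : compatible x y -> is_glb (S := S) x y (res x (p x `&` p y)).
Proof.
move=> xy; have ex : p x `&` p y <= p x := leIl _ _.
have ey : p x `&` p y <= p y := leIr _ _.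
split=> //; first exact: (res_leX ex).
  by rewrite [res x _]xy; exact: (res_leX ey).
move=> w _ [/= wx ewx] [/= wy _].
have wxy : p w <= p x `&` p y by rewrite lexI wx wy.
by change (leX w (res x (p x `&` p y))); split; [rewrite p_res | rewrite res_res].
Qed.

Lemma glue_sections x y : compatible x y ->
  exists j, [/\ p j = p x `|` p y, res j (p x) = x, res j (p y) = y &
    forall j', p j' = p x `|` p y -> res j' (p x) = x -> res j' (p y) = y -> j' = j].
Proof.
move=> xy; have [j [_ [/= xj exj] [/= yj eyj] jmin]] :=
  lub_compatible (compatible_glb xy) (p_res (leIl _ _)).
have xyj : p x `|` p y <= p j by rewrite leUx xj yj.
have j_uniq j' : p j' = p x `|` p y -> res j' (p x) = x -> res j' (p y) = y -> j' = j.
  move=> pj' rx ry.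
  have jx : leX x j' by split; [rewrite pj' leUl | rewrite rx].
  have jy : leX y j' by split; [rewrite pj' leUr | rewrite ry].
  have [/= jj' ej] := jmin j' I jx jy.
  have pe : p j = p j' by apply: le_anti; rewrite jj' pj' xyj.
  by rewrite ej pe res_id.
have jE : res j (p x `|` p y) = j.
  apply: j_uniq; first exact: p_res.
    by rewrite res_res // leUl.
  by rewrite res_res // leUr.
by exists j; split; [rewrite -jE p_res | rewrite -exj | rewrite -eyj |].
Qed.

Lemma extend_section x b : p x <= b -> exists2 y, p y = b & res y (p x) = x.
Proof.
move=> xb; have [w pw] := p_surj (b `\` p x).
have xw : compatible x w by apply: p0_uniq; rewrite p_res ?leIl ?leIr // pw diffKI.
have [j [pj rx _ _]] := glue_sections xw.
by exists j; rewrite // pj pw diffKU; apply/join_idPr.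
Qed.

Lemma res_eq_join u v f g : p u = p v -> f <= p u -> g <= p u ->
  res u f = res v f -> res u g = res v g -> res u (f `|` g) = res v (f `|` g).
Proof.
move=> puv fu gu ef eg; have fv : f <= p v by rewrite -puv.
have gv : g <= p v by rewrite -puv.
have fgu : f `|` g <= p u by rewrite leUx fu gu.
have fgv : f `|` g <= p v by rewrite -puv.
have uf_ug : compatible (res u f) (res u g).
  by rewrite /compatible !p_res // !res_res ?leIl ?leIr.
have [j [_ _ _ j_uniq]] := glue_sections uf_ug; rewrite !p_res // in j_uniq.
have -> : res u (f `|` g) = j.
  by apply: j_uniq; rewrite ?p_res // res_res ?leUl ?leUr.
have -> // : res v (f `|` g) = j.
by apply: j_uniq; rewrite ?p_res // res_res ?leUl ?leUr // ?ef ?eg.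
Qed.

Definition xfilter (G : set X) := is_filter setT leX G.
Definition xultra (G : set X) := is_ultrafilter setT leX G.

Lemma xfilter_up G x y : xfilter G -> G x -> leX x y -> G y.
Proof. by case=> _ _ _ _ H Gx xy; apply: H Gx I xy. Qed.

Lemma xfilter_dir G x y : xfilter G -> G x -> G y ->
  exists w, [/\ G w, leX w x & leX w y].
Proof. by case=> _ _ _ H _; exact: H. Qed.

Lemma xfilter_p_neq0 G x : xfilter G -> G x -> p x <> \bot.
Proof.
move=> hG Gx px; case: (hG) => _ _ [y [_ nGy]] _ _; apply: nGy.
by apply: xfilter_up hG Gx _; exact: p0_leX.
Qed.

Lemma xfilter_res G x y : xfilter G -> G x -> G y -> p y <= p x -> G (res x (p y)).
Proof.
move=> hG Gx Gy yx; have [w [Gw [wx ewx] [wy _]]] := xfilter_dir hG Gx Gy.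
by apply: xfilter_up hG Gw _; split; [rewrite p_res | rewrite res_res].
Qed.

(* When [F] is an ultrafilter through [p a], this is the unique point of [X^*] over [F]
   containing [a]. *)
Definition germ (a : X) (F : set B) : set X :=
  [set x | exists f, [/\ F f, f <= p x, f <= p a & res x f = res a f]].

Lemma germ_self F a : F (p a) -> germ a F a.
Proof. by exists (p a); split. Qed.

Lemma germ_mono a F F' : F `<=` F' -> germ a F `<=` germ a F'.
Proof. by move=> FF' x [f [Ff fx fa e]]; exists f; split=> //; exact: FF'. Qed.

Lemma germ_xfilter F a : bfilter F -> F (p a) -> xfilter (germ a F).
Proof.
move=> hF Fa; split=> //; first by exists a; exact: germ_self.
- have [x0 px0] := p_surj \bot; exists x0; split=> // -[f [Ff fx _ _]].
  by apply: (bfilter_bot hF); apply: bfilter_up hF Ff _; rewrite -px0.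
- move=> x y [f1 [Ff1 f1x f1a e1]] [f2 [Ff2 f2y f2a e2]].
  have f1f := leIl f1 f2; have f2f : f1 `&` f2 <= f2 := leIr _ _.
  have fa : f1 `&` f2 <= p a by exact: le_trans f1a.
  exists (res a (f1 `&` f2)); split.
  + by exists (f1 `&` f2); split; rewrite ?p_res // ?res_res //; exact: bfilterI.
  + by split; rewrite p_res // ?(le_trans f1f) // -(res_res f1f f1x) e1 res_res.
  + by split; rewrite p_res // ?(le_trans f2f) // -(res_res f2f f2y) e2 res_res.
- move=> x y [f [Ff fx fa e]] _ [xy exy]; exists f; split=> //.
    exact: le_trans xy.
  by rewrite -(res_res fx xy) -exy.
Qed.

Lemma germ_image F a : bfilter F -> F (p a) -> p @` germ a F = F.
Proof.
move=> hF Fa; apply/seteqP; split=> [_ [x [f [Ff fx _ _]] <-]|b Fb].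
  exact: bfilter_up hF Ff fx.
have fa : b `&` p a <= p a := leIr _ _.
have ab : p (res a (b `&` p a)) <= b by rewrite p_res // leIl.
have [y py ey] := extend_section ab.
rewrite p_res // in ey.
exists y => //; exists (b `&` p a); split; rewrite ?py ?leIl //.
exact: bfilterI.
Qed.

Lemma germ_xultra F a : bultra F -> F (p a) -> xultra (germ a F).
Proof.
move=> hU Fa; have hG := germ_xfilter hU.1 Fa.
split=> // G' hG' sub; apply/seteqP; split=> // y G'y.
have G'a : G' a by apply: sub; exact: germ_self.
have [w [G'w [wy ewy] [wa ewa]]] := xfilter_dir hG' G'y G'a.
have [Fw|nFw] := pselect (F (p w)).
  by exists (p w); split=> //; rewrite -ewy -ewa.
have [f Ff fw] := bultra_disjoint hU nFw.
have fa : f `&` p a <= p a := leIr _ _.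
have germ_fa : germ a F (res a (f `&` p a)).
  by exists (f `&` p a); split; rewrite ?p_res ?res_res //; exact: bfilterI hU.1 Ff Fa.
have [w' [G'w' [w'w _] [w'f _]]] := xfilter_dir hG' G'w (sub _ germ_fa).
case: (xfilter_p_neq0 hG' G'w'); rewrite p_res // in w'f.
by apply/eqP; rewrite -lex0 -fw lexI w'w andbT (le_trans w'f) ?leIl.
Qed.

Lemma xfilter_image G : xfilter G -> bfilter (p @` G).
Proof.
move=> hG; have [_ [x0 Gx0] _ _ _] := hG; split=> //.
- by exists (p x0); exists x0.
- by exists \bot; split=> // -[x Gx]; exact: xfilter_p_neq0 hG Gx.
- move=> _ _ [x Gx <-] [y Gy <-]; have [w [Gw [wx _] [wy _]]] := xfilter_dir hG Gx Gy.
  by exists (p w); split=> //; exists w.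
- move=> _ b [x Gx <-] _ xb; have [y py ey] := extend_section xb.
  by exists y => //; apply: xfilter_up hG Gx _; split; rewrite ?py.
Qed.

Lemma xfilter_germ G a : xfilter G -> G a -> G = germ a (p @` G).
Proof.
move=> hG Ga; apply/seteqP; split=> [x Gx|x [_ [[y Gy <-] yx ya e]]].
  have [w [Gw [wx ewx] [wa ewa]]] := xfilter_dir hG Gx Ga.
  by exists (p w); split; [exists w | | | rewrite -ewx -ewa].
have := xfilter_res hG Ga Gy ya; rewrite -e => Gr.
by apply: xfilter_up hG Gr _; exact: res_leX.
Qed.

Lemma xultra_image G : xultra G -> bultra (p @` G).
Proof.
move=> [hG Gmax]; split=> [|F' hF' GF']; first exact: xfilter_image.
have [_ [a Ga] _ _ _] := hG.
have F'a : F' (p a) by apply: GF'; exists a.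
have <- : germ a F' = G.
  apply: Gmax; first exact: germ_xfilter.
  by rewrite {1}(xfilter_germ hG Ga); exact: germ_mono.
by rewrite germ_image.
Qed.

Local Notation pt := (ptilde (S := S)).

Definition ultL (a : X) : set (set X) := [set G | xultra G /\ G a].

Lemma germ_ultL F a : bultra F -> F (p a) -> ultL a (germ a F).
Proof. by move=> hU Fa; split; [exact: germ_xultra | exact: germ_self]. Qed.

Lemma image_ultL a : pt @` ultL a = stone (p a).
Proof.
apply/seteqP; split=> [_ [G [hU Ga] <-]|F [hU Fa]].
  by split; [exact: xultra_image | exists a].
by exists (germ a F); [exact: germ_ultL | exact: germ_image hU.1 Fa].
Qed.

Lemma ultL_res a b : b <= p a -> ultL (res a b) = ultL a `&` [set G | stone b (pt G)].
Proof.
move=> ba; apply/seteqP; split=> [G [hU Gab]|G [[hU Ga] [_ [y Gy /= py]]]].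
  split; first by split=> //; apply: xfilter_up hU.1 Gab _; exact: res_leX.
  by split; [exact: xultra_image | exists (res a b) => //; exact: p_res].
by split=> //; rewrite -py; apply: xfilter_res hU.1 Ga Gy _; rewrite py.
Qed.

Lemma ultL_local a G H : ultL a G -> ultL a H -> pt G = pt H -> G = H.
Proof.
move=> [hG Ga] [hH Ha] GH.
by rewrite (xfilter_germ hG.1 Ga) (xfilter_germ hH.1 Ha); congr germ.
Qed.

Lemma ultL0 z : p z = \bot -> ultL z = set0.
Proof.
by move=> pz; apply/seteqP; split=> // G [hU Gz]; case: (xfilter_p_neq0 hU.1 Gz).
Qed.

Lemma ultL_glue a1 a2 j : p j = p a1 `|` p a2 -> res j (p a1) = a1 -> res j (p a2) = a2 ->
  ultL j = ultL a1 `|` ultL a2.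
Proof.
move=> pj r1 r2; apply/seteqP; split=> [G [hU Gj]|G [[hU Ga]|[hU Ga]]].
- have : pt G (p a1 `|` p a2) by exists j.
  case/(bultra_prime (xultra_image hU)) => -[y Gy py]; [left|right]; split=> //.
    by rewrite -r1 -py; apply: xfilter_res hU.1 Gj Gy _; rewrite py pj leUl.
  by rewrite -r2 -py; apply: xfilter_res hU.1 Gj Gy _; rewrite py pj leUr.
- by split=> //; apply: xfilter_up hU.1 Ga _; split; [rewrite pj leUl | rewrite r1].
- by split=> //; apply: xfilter_up hU.1 Ga _; split; [rewrite pj leUr | rewrite r2].
Qed.

Definition agree (a1 a2 : X) := [set f | f <= p a1 `&` p a2 /\ res a1 f = res a2 f].

Lemma agree0 a1 a2 : agree a1 a2 \bot.
Proof. by split; rewrite ?le0x //; apply: p0_uniq; rewrite p_res // le0x. Qed.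

Lemma agree_down a1 a2 f g : agree a1 a2 g -> f <= g -> agree a1 a2 f.
Proof.
move=> [g12 e] fg; have [g1 g2] : g <= p a1 /\ g <= p a2 by apply/andP; rewrite -lexI.
split; first exact: le_trans g12.
by rewrite -(res_res fg g1) e res_res.
Qed.

Lemma agreeU a1 a2 f g : agree a1 a2 f -> agree a1 a2 g -> agree a1 a2 (f `|` g).
Proof.
move=> [f12 ef] [g12 eg]; split; first by rewrite leUx f12 g12.
have e1 : p a1 `&` p a2 <= p a1 := leIl _ _; have e2 : p a1 `&` p a2 <= p a2 := leIr _ _.
have pe : p (res a1 (p a1 `&` p a2)) = p (res a2 (p a1 `&` p a2)) by rewrite !p_res.
have := @res_eq_join _ _ f g pe; rewrite !res_res ?leUx ?f12 ?g12 ?p_res //.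
by apply.
Qed.

Definition local_section (C : set (set X)) :=
  forall G H, C G -> C H -> pt G = pt H -> G = H.

(* An ultrafilter through [p a1 `&` p a2] avoiding the ideal on which [a1] and [a2]
   agree would give two distinct points of [C] with the same image. *)
Lemma ultL_compatible C a1 a2 : local_section C ->
  ultL a1 `<=` C -> ultL a2 `<=` C -> compatible a1 a2.
Proof.
move=> Cloc a1C a2C; apply: contra_notP (fun x => x) => n12.
have [||||F [hU Fe Fnagree]] := @prime_ideal_bultra _ _ (agree a1 a2) (p a1 `&` p a2).
- exact: agree0.
- by move=> f g /agree_down; apply.
- by move=> f g; exact: agreeU.
- by case.
have F1 : F (p a1) by apply: bfilter_up hU.1 Fe (leIl _ _).
have F2 : F (p a2) by apply: bfilter_up hU.1 Fe (leIr _ _).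
have E : germ a1 F = germ a2 F.
  apply: Cloc; [exact/a1C/germ_ultL | exact/a2C/germ_ultL |].
  by rewrite /ptilde /= (germ_image hU.1 F1) (germ_image hU.1 F2).
have [f [Ff f2 f1 ef]] : germ a1 F a2 by rewrite E; exact: germ_self.
by apply: (Fnagree f Ff); split; rewrite ?lexI ?f1 ?f2.
Qed.

Lemma ultL_inj a b : ultL a = ultL b -> a = b.
Proof.
move=> E; have pab : p a = p b by apply: stone_inj; rewrite -!image_ultL E.
have ab : compatible a b.
  by apply: (@ultL_compatible (ultL a)); rewrite -?E //; exact: ultL_local.
by move: ab; rewrite /compatible -pab meetxx !res_id => ->; rewrite pab res_id.
Qed.

Lemma ultL_open a : open_basis xultra setT ultL (ultL a).
Proof. by split=> [G []|G Ga] //; exists a; split. Qed.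

Lemma ultL_compact a : compact_in (open_basis xultra setT ultL) (ultL a).
Proof.
apply: (@compact_of_bultra _ _ _ _ _ pt (p a)).
- by move=> G [hG Ga]; split; [exact: xultra_image | exists a].
- by move=> F hF Fa; exists (germ a F); [exact: germ_ultL | exact: germ_image hF.1 Fa].
move=> U [_ Ubasic] G [hG Ga] UG.
have [i [_ [_ Gi] iU]] := Ubasic G UG.
have [w [Gw [wa ewa] [wi ewi]]] := xfilter_dir hG.1 Ga Gi.
exists (p w); first by exists w.
move=> G' [hG' G'a] [y G'y /= py]; apply: iU; split=> //.
have := xfilter_res hG'.1 G'a G'y; rewrite py -ewa => /(_ wa) G'w.
by apply: xfilter_up hG'.1 G'w _; split.
Qed.

Lemma ultL_surj C : open_basis xultra setT ultL C ->
  compact_in (open_basis xultra setT ultL) C -> local_section C -> exists a, C = ultL a.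
Proof.
move=> Copen Ccompact Cloc; apply: compact_open_basic Copen Ccompact.
- by move=> a G [].
- by have [z pz] := p_surj \bot; exists z; exact: ultL0.
move=> a1 a2 a1C a2C; have [j [pj r1 r2 _]] := glue_sections (ultL_compatible Cloc a1C a2C).
by exists j; exact: ultL_glue.
Qed.

Local Notation D := (dual S).

Lemma Xss_ultL a : Xss (S := S) (ultL a).
Proof. by split; [exact: ultL_open | exact: ultL_compact | exact: ultL_local]. Qed.

Lemma Xss_ultL_surj C : Xss (S := S) C -> exists a, C = ultL a.
Proof. by case=> Copen Ccompact Cloc; exact: ultL_surj. Qed.

Lemma Bss_stone b : Bss (S := S) (stone b).
Proof. by split; [exact: stone_open | exact: stone_compact]. Qed.

Lemma Bss_stone_surj A : Bss (S := S) A -> exists b, A = stone b.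
Proof. by case=> Aopen Acompact; exact: stone_surj. Qed.

Lemma ultL_le x y : ble (S := D) (ultL x) (ultL y) <-> leX x y.
Proof.
change (pt @` ultL x `<=` pt @` ultL y /\
        ultL x = ultL y `&` [set G | (pt @` ultL x) (pt G)] <-> leX x y).
rewrite !image_ultL; split=> [[/stone_le xy E]|[xy E]].
  by split=> //; apply: ultL_inj; rewrite ultL_res.
by split; [exact: stone_mono | rewrite -ultL_res -?E].
Qed.

Lemma dual_gba : is_gba (Bss (S := S)) (set_ops (set B)).
Proof.
apply: set_ops_gba; first by rewrite -stone0; exact: Bss_stone.
move=> _ _ /Bss_stone_surj[a ->] /Bss_stone_surj[b ->].
by rewrite -stoneI -stoneU -stoneD; split; exact: Bss_stone.
Qed.

Lemma dual_res a b : b <= p a -> bres D (ultL a) (stone b) = ultL (res a b).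
Proof. by move=> ba; rewrite ultL_res. Qed.

Lemma dual_lub C1 C2 M : Xss (S := S) C1 -> Xss (S := S) C2 ->
  is_glb (S := D) C1 C2 M -> bp D M = gmeet (bops D) (bp D C1) (bp D C2) ->
  exists J, is_lub (S := D) C1 C2 J.
Proof.
move=> /Xss_ultL_surj[a1 ->] /Xss_ultL_surj[a2 ->] [/Xss_ultL_surj[w ->] w1 w2 wmax].
change (pt @` ultL w = pt @` ultL a1 `&` pt @` ultL a2 ->
        exists J, is_lub (S := D) (ultL a1) (ultL a2) J).
rewrite !image_ultL -stoneI => /stone_inj pw.
have glb : is_glb (S := S) a1 a2 w.
  split=> //; try exact/ultL_le.
  move=> v _ v1 v2; apply/ultL_le/wmax; [exact: Xss_ultL | exact/ultL_le..].
have [j [_ j1 j2 jmax]] := lub_compatible glb pw.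
exists (ultL j); split; [exact: Xss_ultL | exact/ultL_le | exact/ultL_le |].
by move=> _ /Xss_ultL_surj[v ->] v1 v2; apply/ultL_le/jmax => //; exact/ultL_le.
Qed.

Lemma dual_boolean : is_boolean_set D.
Proof.
split; first exact: dual_gba.
split; first by move=> _ /Xss_ultL_surj[a ->]; rewrite /= image_ultL; exact: Bss_stone.
split.
  move=> _ _ /Xss_ultL_surj[a ->] /Bss_stone_surj[b ->].
  change (stone b `<=` pt @` ultL a -> Xss (S := S) (bres D (ultL a) (stone b)) /\
          pt @` bres D (ultL a) (stone b) = stone b).
  rewrite image_ultL => /stone_le ba; rewrite dual_res // image_ultL p_res //.
  by split=> //; exact: Xss_ultL.
split; first by move=> C _; apply/seteqP; split=> [G []|G CG] //; split=> //; exists G.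
split.
  move=> C A A' _ _ _ /= A'A _; apply/seteqP; split=> [G [[CG _] A'G]|G [CG A'G]].
    by split.
  by split=> //; split=> //; exact: A'A.
split.
  move=> _ /Bss_stone_surj[b ->]; have [a <-] := p_surj b.
  by exists (ultL a); split; [exact: Xss_ultL | rewrite /= image_ultL].
split; last exact: dual_lub.
have [z pz] := p_surj \bot; exists (ultL z); split; first exact: Xss_ultL.
  by move=> _ /Xss_ultL_surj[a ->]; apply/ultL_le; exact: p0_leX.
move=> _ /Xss_ultL_surj[a ->]; rewrite /= image_ultL -stone0 => /stone_inj pa.
by rewrite !ultL0.
Qed.

Lemma ultL_morph : bs_morph (S := S) (T := D) (Lset (S := S)) (Mset (S := S)).
Proof.
split=> [||x _|x b _ _ bx]; last by rewrite dual_res.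
- split=> [b _||a b _ _]; [exact: Bss_stone | exact: stone0 |].
  by split; [exact: stoneI | exact: stoneU | exact: stoneD].
- by move=> x _; exact: Xss_ultL.
- exact: image_ultL.
Qed.

End BooleanSet.

Theorem proposition3p13 (d : Order.disp_t) (B : cbDistrLatticeType d) (X : Type)
    (p : X -> B) (res : X -> B -> X) :
  is_boolean_set (of_lattice p res) ->
  is_boolean_set (dual (of_lattice p res)) /\
  bs_iso (S := of_lattice p res) (T := dual (of_lattice p res))
    (Lset (S := of_lattice p res)) (Mset (S := of_lattice p res)).
Proof.
move=> HS; have HD := dual_boolean HS; split=> //.
apply: bs_iso_of_bij => //; first exact: ultL_morph.
- by move=> a b _ _; exact: ultL_inj.
- by move=> a b _ _; exact: stone_inj.
- by move=> _ /(Xss_ultL_surj HS)[a ->]; exists a.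
- by move=> _ /Bss_stone_surj[b ->]; exists b.
Qed.
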